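(* Let $A,B,E$ be finite-dimensional, $U:\mathcal{H}_A\to\mathcal{H}_B\otimes\mathcal{H}_E$ an isometry and $V:\mathcal{H}_A\to\mathcal{H}_B\otimes\mathcal{H}_E$ a linear operator, with $\mathcal{U}(X)=UXU^\dagger$, $\mathcal{V}(X)=VXV^\dagger$. For every $n\ge1$, the sets $\mathsf{A}_n$ and $\mathsf{B}_n$ defined in the context are convex.
   Context: Let $A_i\cong A$, $B_i\cong B$, $E_i\cong E$ for $i=1,\dots,n$, let $R_0,E_0$ be trivial (one-dimensional) and $R_1,\dots,R_n$ finite-dimensional systems of arbitrary dimension. For quantum channels (CPTP maps) $\mathcal{P}^i$ from $R_{i-1}E_{i-1}$ to $A_iR_i$, set $\rho[\{\mathcal{P}^i\}_{i=1}^n]=\operatorname{tr}_{R_nE_n}\,\mathcal{U}_{A_n\to B_nE_n}\circ\mathcal{P}^n\circ\cdots\circ\mathcal{U}_{A_1\to B_1E_1}\circ\mathcal{P}^1$ (applied to the trivial input $1$), an operator on $B_1\cdots B_n$; similarly $\sigma[\{\mathcal{Q}^i\}_{i=1}^n]=\operatorname{tr}_{R_nE_n}\,\mathcal{V}\circ\mathcal{Q}^n\circ\cdots\circ\mathcal{V}\circ\mathcal{Q}^1$ for quantum channels $\mathcal{Q}^i$ from $R_{i-1}E_{i-1}$ to $A_iR_i$. $\mathsf{A}_n$ is the set of all $\rho[\{\mathcal{P}^i\}]$ and $\mathsf{B}_n$ the set of all $\sigma[\{\mathcal{Q}^i\}]$, ranging over all dimensions of the $R_i$ and all such channels. *)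

From HB Require Import structures.
From mathcomp Require Import all_boot all_order all_algebra.
From mathcomp Require Import mxtens.
Set Implicit Arguments. Unset Strict Implicit. Unset Printing Implicit Defensive.
Import Order.TTheory GRing.Theory Num.Theory.
Local Open Scope ring_scope.

(* Finite-dimensional quantum systems are modelled by matrices over an abstract
   complex field C : numClosedFieldType (e.g. algC or complex R).
   A system of dimension d has operators 'M[C]_d; the composite system X Y of
   dimensions p, q is 'M_(p * q) with the Kronecker (mxtens) index convention
   (i, j) |-> i * q + j. *)

Section Quantum.
Variable C : numClosedFieldType.

Definition adj m n (M : 'M[C]_(m, n)) : 'M[C]_(n, m) := map_mx Num.conj (M^T).

Definition psd n (M : 'M[C]_n) : Prop :=
  forall v : 'cV[C]_n, 0 <= (adj v *m M *m v) 0 0.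

Definition blk k m (M : 'M[C]_(k * m)) (i j : 'I_k) : 'M[C]_m :=
  \matrix_(a, c) M (mxtens_index (i, a)) (mxtens_index (j, c)).

Definition idtens k m p (Phi : 'M[C]_m -> 'M[C]_p) (M : 'M[C]_(k * m)) : 'M[C]_(k * p) :=
  \matrix_(x, y) Phi (blk M (mxtens_unindex x).1 (mxtens_unindex y).1)
                     (mxtens_unindex x).2 (mxtens_unindex y).2.

Definition linear_map m p (Phi : 'M[C]_m -> 'M[C]_p) : Prop :=
  forall (a : C) X Y, Phi (a *: X + Y) = a *: Phi X + Phi Y.

Definition completely_positive m p (Phi : 'M[C]_m -> 'M[C]_p) : Prop :=
  forall k (M : 'M[C]_(k * m)), psd M -> psd (idtens Phi M).

Definition trace_preserving m p (Phi : 'M[C]_m -> 'M[C]_p) : Prop :=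
  forall X, \tr (Phi X) = \tr X.

Definition channel m p (Phi : 'M[C]_m -> 'M[C]_p) : Prop :=
  [/\ linear_map Phi, completely_positive Phi & trace_preserving Phi].

Definition ptrace2 p q (M : 'M[C]_(p * q)) : 'M[C]_p :=
  \matrix_(i, j) \sum_(k < q) M (mxtens_index (i, k)) (mxtens_index (j, k)).

Definition conj_op m n (W : 'M[C]_(m, n)) (X : 'M[C]_n) : 'M[C]_m :=
  W *m X *m adj W.

(* Reordering of tensor factors  b (x) ((B (x) E) (x) R)  -->  (b (x) B) (x) (R (x) E). *)
Definition reorder_idx b dB e r (x : 'I_((b * dB) * (r * e))) : 'I_(b * ((dB * e) * r)) :=
  mxtens_index ((mxtens_unindex (mxtens_unindex x).1).1,
    mxtens_index (mxtens_index ((mxtens_unindex (mxtens_unindex x).1).2,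
                                (mxtens_unindex (mxtens_unindex x).2).2),
                  (mxtens_unindex (mxtens_unindex x).2).1)).

Definition reorder b dB e r (M : 'M[C]_(b * ((dB * e) * r))) : 'M[C]_((b * dB) * (r * e)) :=
  \matrix_(x, y) M (reorder_idx x) (reorder_idx y).

(* Dimension of R_i (R_0 trivial), of E_i (E_0 trivial), and of B_1...B_i. *)
Definition rdim (r : nat -> nat) (i : nat) : nat := if i is 0 then 1%N else r i.
Definition edim (dE : nat) (i : nat) : nat := if i is 0 then 1%N else dE.
Fixpoint bdim (dB : nat) (i : nat) : nat :=
  if i is i'.+1 then (bdim dB i' * dB)%N else 1%N.

Section Run.
Variables (dA dB dE : nat) (W : 'M[C]_(dB * dE, dA)).

(* The state on B_1...B_i (x) (R_i (x) E_i) after i rounds; P i is the (i+1)-th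
   channel, from R_i E_i to A_{i+1} R_{i+1}. *)
Fixpoint run (r : nat -> nat)
  (P : forall i : nat, 'M[C]_(rdim r i * edim dE i) -> 'M[C]_(dA * rdim r i.+1))
  (i : nat) : 'M[C]_(bdim dB i * (rdim r i * edim dE i)) :=
  match i return 'M[C]_(bdim dB i * (rdim r i * edim dE i)) with
  | 0 => 1%:M
  | i'.+1 =>
      reorder (conj_op (1%:M *t (W *t 1%:M)) (idtens (P i') (run P i')))
  end.

Definition out_state (r : nat -> nat)
  (P : forall i : nat, 'M[C]_(rdim r i * edim dE i) -> 'M[C]_(dA * rdim r i.+1))
  (n : nat) : 'M[C]_(bdim dB n) := ptrace2 (run P n).

(* The set of all out_state over all dimensions of R_1, R_2, ... and all
   channels P^1..P^n (only the first n channels are used). With W = U this is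
   A_n; with W = V it is B_n. *)
Definition out_set (n : nat) (X : 'M[C]_(bdim dB n)) : Prop :=
  exists (r : nat -> nat)
    (P : forall i : nat, 'M[C]_(rdim r i * edim dE i) -> 'M[C]_(dA * rdim r i.+1)),
    (forall i, (i < n)%N -> channel (P i)) /\ X = out_state P n.
End Run.

Definition convex_mxset d (S : 'M[C]_d -> Prop) : Prop :=
  forall X Y (p : C), S X -> S Y -> 0 <= p <= 1 -> S (p *: X + (1 - p) *: Y).

End Quantum.
Arguments out_set {C dA dB dE} W n X.

From HB Require Import structures.
From mathcomp Require Import all_boot all_order all_algebra.
From mathcomp Require Import mxtens.
Import Order.TTheory GRing.Theory Num.Theory.
Local Open Scope ring_scope.

Set Implicit Arguments. Unset Strict Implicit. Unset Printing Implicit Defensive.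

(* Convexity comes from running two strategies side by side on the direct sum
   of their memories.  Given strategies (R_i, P^i), (R'_i, P'^i) and a weight
   p, the mixed strategy has memories R_i (+) R'_i: its i-th channel
   compresses its input to the two blocks (for i = 1, where the input is
   trivial, it weights it by p and 1 - p instead), applies P^i and P'^i, and
   embeds the two outputs into orthogonal blocks.  Neither W nor the
   reordering of tensor factors touches the memory, so compressing a whole
   run to one block commutes with every round: the state after n rounds,
   compressed to the R_n- and R'_n-blocks, is p times the run of P and
   (1 - p) times the run of P', and tracing out R_n (+) R'_n adds them up.
   The argument works for every W. *)

Section Conjugation.
Variable C : numClosedFieldType.

Lemma adjM m n p (A : 'M[C]_(m, n)) (B : 'M[C]_(n, p)) : adj (A *m B) = adj B *m adj A.
Proof. by rewrite /adj trmx_mul map_mxM. Qed.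

Lemma adjK m n (A : 'M[C]_(m, n)) : adj (adj A) = A.
Proof. by apply/matrixP => i j; rewrite !mxE conjCK. Qed.

Lemma adj_tens m n p q (A : 'M[C]_(m, n)) (B : 'M[C]_(p, q)) :
  adj (A *t B) = adj A *t adj B.
Proof. by apply/matrixP => i j; rewrite !mxE rmorphM. Qed.

Lemma adj_mx1 n : adj (1%:M : 'M[C]_n) = 1%:M.
Proof. by rewrite /adj trmx1 map_mx1. Qed.

Lemma conj_opM m n p (A : 'M[C]_(m, n)) (B : 'M[C]_(n, p)) X :
  conj_op A (conj_op B X) = conj_op (A *m B) X.
Proof. by rewrite /conj_op adjM !mulmxA. Qed.

Lemma conj_op1 n (X : 'M[C]_n) : conj_op 1%:M X = X.
Proof. by rewrite /conj_op adj_mx1 mul1mx mulmx1. Qed.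

Lemma conj_op0 m n (X : 'M[C]_n) : conj_op (0 : 'M[C]_(m, n)) X = 0.
Proof. by rewrite /conj_op !mul0mx. Qed.

Lemma conj_op_linear m n (A : 'M[C]_(m, n)) : linear_map (conj_op A).
Proof. by move=> a X Y; rewrite /conj_op mulmxDr mulmxDl -!scalemxAr -scalemxAl. Qed.

Lemma mxtrace_conj_op m n (A : 'M[C]_(m, n)) X :
  adj A *m A = 1%:M -> \tr (conj_op A X) = \tr X.
Proof. by move=> isoA; rewrite /conj_op mxtrace_mulC mulmxA isoA mul1mx. Qed.

End Conjugation.

Definition tensmap m n m' n' (f : 'I_m -> 'I_m') (g : 'I_n -> 'I_n')
    (x : 'I_(m * n)) : 'I_(m' * n') :=
  mxtens_index (f (mxtens_unindex x).1, g (mxtens_unindex x).2).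

Lemma tensmapE m n m' n' (f : 'I_m -> 'I_m') (g : 'I_n -> 'I_n') i j :
  tensmap f g (mxtens_index (i, j)) = mxtens_index (f i, g j).
Proof. by rewrite /tensmap mxtens_indexK. Qed.

Lemma sum_tens (R : nmodType) m n (F : 'I_(m * n) -> R) :
  \sum_k F k = \sum_(i < m) \sum_(j < n) F (mxtens_index (i, j)).
Proof.
rewrite pair_big (reindex (@mxtens_index m n)) /=; last first.
  by exists (@mxtens_unindex m n) => x _; rewrite (mxtens_indexK, mxtens_unindexK).
by apply: eq_bigr => -[i j].
Qed.

Lemma sum_tens_split (R : nmodType) r r' e (F : 'I_((r + r') * e) -> R) :
  \sum_k F k = \sum_(k < r * e) F (tensmap (@lshift r r') id k)
             + \sum_(k < r' * e) F (tensmap (@rshift r r') id k).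
Proof.
rewrite !sum_tens big_split_ord /=; congr (_ + _); apply: eq_bigr => i _;
  by apply: eq_bigr => j _; rewrite tensmapE.
Qed.

Section Selection.
Variable C : numClosedFieldType.

Definition sel_mx m n (f : 'I_m -> 'I_n) : 'M[C]_(m, n) := mxsub f id 1%:M.

Lemma sel_mx_id n : sel_mx (@id 'I_n) = 1%:M.
Proof. exact: mxsub_id. Qed.

Lemma adj_sel_mx m n (f : 'I_m -> 'I_n) : adj (sel_mx f) = mxsub id f 1%:M.
Proof. by rewrite /adj trmx_mxsub trmx1 map_mxsub map_mx1. Qed.

Lemma sel_mx_mul_adj m n p (f : 'I_m -> 'I_n) (g : 'I_p -> 'I_n) :
  sel_mx f *m adj (sel_mx g) = mxsub f g 1%:M.
Proof. by rewrite adj_sel_mx -mxsub_mul mul1mx. Qed.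

Lemma conj_sel_mx m n (f : 'I_m -> 'I_n) (X : 'M[C]_n) :
  conj_op (sel_mx f) X = mxsub f f X.
Proof. by rewrite /conj_op adj_sel_mx -rowsubE mulmx_colsub mulmx1 -mxsubcr. Qed.

Lemma mul_sel_mx m n p (f : 'I_m -> 'I_n) (g : 'I_n -> 'I_p) :
  sel_mx f *m sel_mx g = sel_mx (g \o f).
Proof. by rewrite -rowsubE /sel_mx -rowsub_comp. Qed.

Lemma tens_sel_mx m n m' n' (f : 'I_m -> 'I_m') (g : 'I_n -> 'I_n') :
  sel_mx f *t sel_mx g = sel_mx (tensmap f g).
Proof.
apply/matrixP => x y.
case: (mxtens_indexP x) => i j; case: (mxtens_indexP y) => k l.
rewrite tensmxE !mxE tensmapE -natrM mulnb.
by rewrite (can_eq (@mxtens_indexK _ _)) xpair_eqE.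
Qed.

Lemma tens11 m n : (1%:M : 'M[C]_m) *t (1%:M : 'M[C]_n) = 1%:M.
Proof.
rewrite -!sel_mx_id tens_sel_mx; apply/matrixP => x y; rewrite !mxE.
by case: (mxtens_indexP x) => i j; rewrite tensmapE.
Qed.

Lemma mxsub_inj1 m n (f : 'I_m -> 'I_n) :
  injective f -> mxsub f f (1%:M : 'M[C]_n) = 1%:M.
Proof. by move=> f_inj; apply/matrixP => i j; rewrite !mxE (inj_eq f_inj). Qed.

Lemma mxsub_lrshift1 m n :
  mxsub (@lshift m n) (@rshift m n) (1%:M : 'M[C]_(m + n)) = 0.
Proof. by apply/matrixP => i j; rewrite !mxE eq_lrshift. Qed.

Lemma mxsub_rlshift1 m n :
  mxsub (@rshift m n) (@lshift m n) (1%:M : 'M[C]_(m + n)) = 0.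
Proof. by apply/matrixP => i j; rewrite !mxE eq_rlshift. Qed.

Lemma conj_op_sel_embed dA m n p (h : 'I_m -> 'I_n) (k : 'I_p -> 'I_n)
    (X : 'M[C]_(dA * p)) :
  conj_op (1%:M *t sel_mx h) (conj_op (1%:M *t adj (sel_mx k)) X)
  = conj_op (1%:M *t mxsub h k 1%:M) X.
Proof. by rewrite conj_opM tensmx_mul mul1mx sel_mx_mul_adj. Qed.

Lemma mxtrace_embed dA m n (h : 'I_m -> 'I_n) (X : 'M[C]_(dA * m)) :
  injective h -> \tr (conj_op (1%:M *t adj (sel_mx h)) X) = \tr X.
Proof.
move=> h_inj; apply: mxtrace_conj_op.
by rewrite adj_tens adjK adj_mx1 tensmx_mul mul1mx sel_mx_mul_adj mxsub_inj1 ?tens11.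
Qed.

Lemma mxtrace_split r r' e (X : 'M[C]_((r + r') * e)) :
  \tr (conj_op (sel_mx (@lshift r r') *t 1%:M) X)
  + \tr (conj_op (sel_mx (@rshift r r') *t 1%:M) X) = \tr X.
Proof.
rewrite -!sel_mx_id !tens_sel_mx !conj_sel_mx [RHS]/mxtrace (sum_tens_split (fun k => X k k)).
by congr (_ + _); apply: eq_bigr => k _; rewrite mxE.
Qed.

Lemma ptrace2_split b r r' e (M : 'M[C]_(b * ((r + r') * e))) :
  ptrace2 M = ptrace2 (conj_op (1%:M *t (sel_mx (@lshift r r') *t 1%:M)) M)
            + ptrace2 (conj_op (1%:M *t (sel_mx (@rshift r r') *t 1%:M)) M).
Proof.
rewrite -!sel_mx_id !tens_sel_mx !conj_sel_mx; apply/matrixP => i j; rewrite !mxE.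
rewrite (sum_tens_split (fun k => M (mxtens_index (i, k)) (mxtens_index (j, k)))).
by congr (_ + _); apply: eq_bigr => k _; rewrite mxE !tensmapE.
Qed.

Lemma ptrace2Z b q (a : C) (M : 'M[C]_(b * q)) : ptrace2 (a *: M) = a *: ptrace2 M.
Proof. by apply/matrixP => i j; rewrite !mxE mulr_sumr; apply: eq_bigr => k _; rewrite mxE. Qed.

End Selection.
Arguments sel_mx {C m n} f.

Section CompletePositivity.
Variable C : numClosedFieldType.

Lemma linear_mapZ m p (Phi : 'M[C]_m -> 'M[C]_p) (a : C) X :
  linear_map Phi -> Phi (a *: X) = a *: Phi X.
Proof.
move=> linPhi; have Phi0 : Phi 0 = 0.
  by have := linPhi (-1) 0 0; rewrite !scaleN1r !oppr0 !addr0 addNr.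
by rewrite -[a *: X]addr0 linPhi Phi0 addr0.
Qed.

Lemma linear_mapD m p (Phi : 'M[C]_m -> 'M[C]_p) X Y :
  linear_map Phi -> Phi (X + Y) = Phi X + Phi Y.
Proof. by move=> linPhi; rewrite -[X]scale1r linPhi !scale1r. Qed.

Lemma scale_linear m (a : C) : linear_map ( *:%R a : 'M[C]_m -> 'M[C]_m).
Proof. by move=> b X Y; rewrite scalerDr !scalerA mulrC. Qed.

Lemma idtensE k m p (Phi : 'M[C]_m -> 'M[C]_p) (M : 'M[C]_(k * m)) i a j c :
  idtens Phi M (mxtens_index (i, a)) (mxtens_index (j, c)) = Phi (blk M i j) a c.
Proof. by rewrite mxE !mxtens_indexK. Qed.

Lemma blk_idtens k m p (Phi : 'M[C]_m -> 'M[C]_p) (M : 'M[C]_(k * m)) i j :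
  blk (idtens Phi M) i j = Phi (blk M i j).
Proof. by apply/matrixP => a c; rewrite mxE idtensE. Qed.

Lemma eq_idtens k m p (Phi Psi : 'M[C]_m -> 'M[C]_p) (M : 'M[C]_(k * m)) :
  Phi =1 Psi -> idtens Phi M = idtens Psi M.
Proof. by move=> eqPhi; apply/matrixP => x y; rewrite !mxE eqPhi. Qed.

Lemma idtens_comp k m p q (Phi : 'M[C]_p -> 'M[C]_q) (Psi : 'M[C]_m -> 'M[C]_p)
    (M : 'M[C]_(k * m)) :
  idtens Phi (idtens Psi M) = idtens (Phi \o Psi) M.
Proof. by apply/matrixP => x y; rewrite !mxE blk_idtens. Qed.

Lemma idtensD k m p (Phi Psi : 'M[C]_m -> 'M[C]_p) (M : 'M[C]_(k * m)) :
  idtens (fun X => Phi X + Psi X) M = idtens Phi M + idtens Psi M.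
Proof. by apply/matrixP => x y; rewrite !mxE. Qed.

Lemma idtens_scale k m (a : C) (M : 'M[C]_(k * m)) : idtens ( *:%R a) M = a *: M.
Proof.
apply/matrixP => x y; rewrite !mxE.
by case: (mxtens_indexP x) => i i'; case: (mxtens_indexP y) => j j'; rewrite !mxtens_indexK.
Qed.

Lemma idtensZ k m p (Phi : 'M[C]_m -> 'M[C]_p) (a : C) (M : 'M[C]_(k * m)) :
  linear_map Phi -> idtens Phi (a *: M) = a *: idtens Phi M.
Proof.
move=> linPhi; apply/matrixP => x y.
have blkZ i j : blk (a *: M) i j = a *: blk M i j by apply/matrixP => u v; rewrite !mxE.
by rewrite !mxE blkZ linear_mapZ // mxE.
Qed.

Lemma tens1mx_mulE k m n l (Q : 'M[C]_(m, n)) (M : 'M[C]_(k * n, l)) i a y :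
  ((1%:M *t Q) *m M) (mxtens_index (i, a)) y
    = \sum_(u < n) Q a u * M (mxtens_index (i, u)) y.
Proof.
rewrite mxE sum_tens (bigD1 i) //= [X in _ + X]big1 ?addr0 => [|j ji].
  by apply: eq_bigr => u _; rewrite tensmxE mxE eqxx mul1r.
by rewrite big1 // => u _; rewrite tensmxE mxE eq_sym (negPf ji) !mul0r.
Qed.

Lemma mulmx_tens1E k m n l (Q : 'M[C]_(m, n)) (M : 'M[C]_(l, k * m)) x j c :
  (M *m (1%:M *t Q)) x (mxtens_index (j, c))
    = \sum_(v < m) M x (mxtens_index (j, v)) * Q v c.
Proof.
rewrite mxE sum_tens (bigD1 j) //= [X in _ + X]big1 ?addr0 => [|i ij].
  by apply: eq_bigr => v _; rewrite tensmxE mxE eqxx mul1r.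
by rewrite big1 // => v _; rewrite tensmxE mxE (negPf ij) mul0r mulr0.
Qed.

Lemma idtens_conj_op k m n (Q : 'M[C]_(m, n)) (M : 'M[C]_(k * n)) :
  idtens (conj_op Q) M = conj_op (1%:M *t Q) M.
Proof.
apply/matrixP => x y.
case: (mxtens_indexP x) => i a; case: (mxtens_indexP y) => j c.
rewrite idtensE /conj_op adj_tens adj_mx1 mulmx_tens1E mxE.
apply: eq_bigr => v _; congr (_ * _).
by rewrite tens1mx_mulE mxE; apply: eq_bigr => u _; rewrite mxE.
Qed.

Lemma psd_conj_op m n (Q : 'M[C]_(m, n)) (M : 'M[C]_n) : psd M -> psd (conj_op Q M).
Proof. by move=> psdM v; have := psdM (adj Q *m v); rewrite /conj_op adjM adjK !mulmxA. Qed.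

Lemma psdD n (M N : 'M[C]_n) : psd M -> psd N -> psd (M + N).
Proof. by move=> psdM psdN v; rewrite mulmxDr mulmxDl mxE addr_ge0. Qed.

Lemma psdZ n (a : C) (M : 'M[C]_n) : 0 <= a -> psd M -> psd (a *: M).
Proof. by move=> a_ge0 psdM v; rewrite -scalemxAr -scalemxAl mxE mulr_ge0. Qed.

Lemma cp_conj_op m n (Q : 'M[C]_(m, n)) : completely_positive (conj_op Q).
Proof. by move=> k M psdM; rewrite idtens_conj_op; apply: psd_conj_op. Qed.

Lemma cp_scale m (a : C) : 0 <= a -> completely_positive ( *:%R a : 'M[C]_m -> 'M[C]_m).
Proof. by move=> a_ge0 k M psdM; rewrite idtens_scale; apply: psdZ. Qed.

Lemma cp_comp m p q (Phi : 'M[C]_p -> 'M[C]_q) (Psi : 'M[C]_m -> 'M[C]_p) :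
  completely_positive Phi -> completely_positive Psi ->
  completely_positive (Phi \o Psi).
Proof. by move=> cpPhi cpPsi k M psdM; rewrite -idtens_comp; apply/cpPhi/cpPsi. Qed.

Lemma cpD m p (Phi Psi : 'M[C]_m -> 'M[C]_p) :
  completely_positive Phi -> completely_positive Psi ->
  completely_positive (fun X => Phi X + Psi X).
Proof.
by move=> cpPhi cpPsi k M psdM; rewrite idtensD; apply: psdD; [apply: cpPhi | apply: cpPsi].
Qed.

End CompletePositivity.

Section Round.
Variables (C : numClosedFieldType) (dA dB dE : nat) (W : 'M[C]_(dB * dE, dA)).

Definition round b s (Y : 'M[C]_(b * (dA * s))) : 'M[C]_((b * dB) * (s * dE)) :=
  reorder (conj_op (1%:M *t (W *t 1%:M)) Y).

Lemma runS r P i : run W (r := r) P i.+1 = round (idtens (P i) (run W P i)).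
Proof. by []. Qed.

Lemma roundZ b s (a : C) (Y : 'M[C]_(b * (dA * s))) : round (a *: Y) = a *: round Y.
Proof.
rewrite /round linear_mapZ; last exact: conj_op_linear.
by apply/matrixP => x y; rewrite !mxE.
Qed.

Lemma reorder_conj_op b e r (M : 'M[C]_(b * ((dB * e) * r))) :
  reorder M = conj_op (sel_mx (@reorder_idx b dB e r)) M.
Proof. by rewrite conj_sel_mx. Qed.

Lemma reorder_natural b e r s (f : 'I_r -> 'I_s) :
  (1%:M *t (sel_mx f *t 1%:M)) *m sel_mx (@reorder_idx b dB e s)
  = sel_mx (@reorder_idx b dB e r) *m (1%:M *t (1%:M *t sel_mx f)) :> 'M[C]_(_, _).
Proof.
rewrite -!sel_mx_id !tens_sel_mx !mul_sel_mx; apply/matrixP => x y; rewrite !mxE.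
case: (mxtens_indexP x) => bB re; case: (mxtens_indexP bB) => i j.
by case: (mxtens_indexP re) => k l; rewrite /= !tensmapE /reorder_idx !mxtens_indexK.
Qed.

Lemma idtens_round b r s (f : 'I_r -> 'I_s) (Y : 'M[C]_(b * (dA * s))) :
  idtens (conj_op (sel_mx f *t 1%:M)) (round Y)
  = round (idtens (conj_op (1%:M *t sel_mx f)) Y).
Proof.
rewrite !idtens_conj_op /round !reorder_conj_op !conj_opM reorder_natural -!mulmxA.
by rewrite !tensmx_mul !mulmx1 !mul1mx.
Qed.

End Round.

Section Compression.
Local Unset Implicit Arguments.
Variables (C : numClosedFieldType) (dA dB dE : nat) (W : 'M[C]_(dB * dE, dA)).
Variables (r s : nat -> nat) (n : nat) (c : C).
Variable P : forall i, 'M[C]_(rdim r i * edim dE i) -> 'M[C]_(dA * rdim r i.+1).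
Variable Q : forall i, 'M[C]_(rdim s i * edim dE i) -> 'M[C]_(dA * rdim s i.+1).
Variable g : forall i, 'M[C]_(rdim r i * edim dE i) -> 'M[C]_(rdim s i * edim dE i).
Variable f : forall i, 'I_(s i.+1) -> 'I_(r i.+1).

Hypothesis g0 : forall X, g 0 X = c *: X.
Hypothesis gS : forall i X, g i.+1 X = conj_op (sel_mx (f i) *t 1%:M) X.
Hypothesis gP : forall i X, conj_op (1%:M *t sel_mx (f i)) (P i X) = Q i (g i X).
Hypothesis linQ : forall i, (i < n)%N -> linear_map (Q i).

Lemma run_compress i : (i <= n)%N -> idtens (g i) (run W P i) = c *: run W Q i.
Proof.
elim: i => [|i IHi] lt_in.
  by rewrite (eq_idtens _ g0) idtens_scale.
rewrite (eq_idtens _ (gS i)) !runS idtens_round idtens_comp (eq_idtens _ (gP i)).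
rewrite -(idtens_comp (Q i)) IHi 1?ltnW // idtensZ ?roundZ //; exact: linQ.
Qed.

End Compression.
Arguments run_compress {C dA dB dE} W {r s n c P Q g} f.

Section Mixture.
Local Unset Implicit Arguments.
Variables (C : numClosedFieldType) (dA dE : nat) (r r' : nat -> nat) (p : C).

Definition rsum i := (r i + r' i)%N.

Definition compress_l i : 'M[C]_(rdim rsum i * edim dE i) -> 'M[C]_(rdim r i * edim dE i) :=
  if i is j.+1 then conj_op (sel_mx (@lshift (r j.+1) (r' j.+1)) *t 1%:M)
  else *:%R p.

Definition compress_r i : 'M[C]_(rdim rsum i * edim dE i) -> 'M[C]_(rdim r' i * edim dE i) :=
  if i is j.+1 then conj_op (sel_mx (@rshift (r j.+1) (r' j.+1)) *t 1%:M)
  else *:%R (1 - p).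

Definition embed_l i : 'M[C]_(dA * rdim r i.+1) -> 'M[C]_(dA * rdim rsum i.+1) :=
  conj_op (1%:M *t adj (sel_mx (@lshift (r i.+1) (r' i.+1)))).

Definition embed_r i : 'M[C]_(dA * rdim r' i.+1) -> 'M[C]_(dA * rdim rsum i.+1) :=
  conj_op (1%:M *t adj (sel_mx (@rshift (r i.+1) (r' i.+1)))).

Lemma compress_l_linear i : linear_map (compress_l i).
Proof. by case: i => [|i]; [apply: scale_linear | apply: conj_op_linear]. Qed.

Lemma compress_r_linear i : linear_map (compress_r i).
Proof. by case: i => [|i]; [apply: scale_linear | apply: conj_op_linear]. Qed.

Lemma compress_l_cp i : 0 <= p -> completely_positive (compress_l i).
Proof. by case: i => [|i] p_ge0; [apply: cp_scale | apply: cp_conj_op]. Qed.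

Lemma compress_r_cp i : p <= 1 -> completely_positive (compress_r i).
Proof. by case: i => [|i] p_le1; [apply: cp_scale; rewrite subr_ge0 | apply: cp_conj_op]. Qed.

Lemma mxtrace_compress i X : \tr (compress_l i X) + \tr (compress_r i X) = \tr X.
Proof.
case: i X => [|i] X /=; last exact: mxtrace_split.
by rewrite !mxtraceZ -mulrDl addrC subrK mul1r.
Qed.

Section MixedStrategy.
Variable P : forall i, 'M[C]_(rdim r i * edim dE i) -> 'M[C]_(dA * rdim r i.+1).
Variable P' : forall i, 'M[C]_(rdim r' i * edim dE i) -> 'M[C]_(dA * rdim r' i.+1).

Definition mix_strategy i (X : 'M[C]_(rdim rsum i * edim dE i)) : 'M[C]_(dA * rdim rsum i.+1) :=
  embed_l i (P i (compress_l i X)) + embed_r i (P' i (compress_r i X)).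

Lemma mix_strategy_compress_l i X :
  conj_op (1%:M *t sel_mx (@lshift (r i.+1) (r' i.+1))) (mix_strategy i X)
  = P i (compress_l i X).
Proof.
rewrite /mix_strategy linear_mapD; last exact: conj_op_linear.
rewrite /embed_l /embed_r !conj_op_sel_embed mxsub_inj1; last exact: lshift_inj.
by rewrite mxsub_lrshift1 tensmx0 conj_op0 addr0 tens11 conj_op1.
Qed.

Lemma mix_strategy_compress_r i X :
  conj_op (1%:M *t sel_mx (@rshift (r i.+1) (r' i.+1))) (mix_strategy i X)
  = P' i (compress_r i X).
Proof.
rewrite /mix_strategy linear_mapD; last exact: conj_op_linear.
rewrite /embed_l /embed_r !conj_op_sel_embed mxsub_rlshift1 tensmx0 conj_op0 add0r.
by rewrite mxsub_inj1 ?tens11 ?conj_op1 //; exact: rshift_inj.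
Qed.

Lemma mix_strategy_channel i :
  0 <= p <= 1 -> channel (P i) -> channel (P' i) -> channel (mix_strategy i).
Proof.
case/andP=> p_ge0 p_le1 [linP cpP trP] [linP' cpP' trP']; split.
- move=> a X Y; rewrite /mix_strategy compress_l_linear compress_r_linear linP linP'.
  by rewrite /embed_l /embed_r !conj_op_linear scalerDr addrACA.
- apply: cpD; (apply: cp_comp; first exact: cp_conj_op); apply: cp_comp => //.
    exact: compress_l_cp.
  exact: compress_r_cp.
- move=> X; rewrite mxtraceD /embed_l /embed_r !mxtrace_embed.
  + by rewrite trP trP' mxtrace_compress.
  + exact: (@rshift_inj _ _).
  exact: (@lshift_inj _ _).
Qed.

Lemma out_state_mix dB (W : 'M[C]_(dB * dE, dA)) n :
  (0 < n)%N -> (forall i, (i < n)%N -> linear_map (P i)) ->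
  (forall i, (i < n)%N -> linear_map (P' i)) ->
  out_state W mix_strategy n = p *: out_state W P n + (1 - p) *: out_state W P' n.
Proof.
case: n => [//|n] _ linP linP'.
have run_l := run_compress W (fun i => @lshift (r i.+1) (r' i.+1)) (g := compress_l)
  (fun _ => erefl) (fun _ _ => erefl) mix_strategy_compress_l linP _ (leqnn _).
have run_r := run_compress W (fun i => @rshift (r i.+1) (r' i.+1)) (g := compress_r)
  (fun _ => erefl) (fun _ _ => erefl) mix_strategy_compress_r linP' _ (leqnn _).
by rewrite /out_state ptrace2_split -!idtens_conj_op run_l run_r !ptrace2Z.
Qed.

End MixedStrategy.
End Mixture.
Arguments mix_strategy {C dA dE r r'} p P P' i X.

Lemma convex_out_set (C : numClosedFieldType) dA dB dE (W : 'M[C]_(dB * dE, dA)) n :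
  (0 < n)%N -> convex_mxset (out_set W n).
Proof.
move=> n_gt0 _ _ p [r [P [chP ->]]] [r' [P' [chP' ->]]] p01.
exists (rsum r r'), (mix_strategy p P P'); split.
  by move=> i lt_in; apply: mix_strategy_channel; [| apply: chP | apply: chP'].
by rewrite out_state_mix // => i lt_in; [case: (chP i lt_in) | case: (chP' i lt_in)].
Qed.

Theorem lemma4 (C : numClosedFieldType) (dA dB dE : nat)
  (U V : 'M[C]_(dB * dE, dA)) (hU : adj U *m U = 1%:M) (n : nat) (hn : (1 <= n)%N) :
  convex_mxset (out_set U n) /\ convex_mxset (out_set V n).
Proof. by split; apply: convex_out_set. Qed.
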